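(* Let $k\geq 3$ and consider the single braided Coxeter group $W^3_k$ with generators $s_1,s_2,s_3$. For all $\lambda\in\mathbb{N}_0$ and $1\le r\le 3$, \[ l_R(\omega((s_1s_2s_3)^\lambda s_1\cdots s_r))\leq \lambda+r-2\left\lfloor\frac{\lambda+\mathbf{1}_{r\geq2}}{k}\right\rfloor. \]
   Context: $W^n_k=\langle s_1,\dots,s_n\mid s_i^2=(s_is_j)^{k}=1\ \forall i\neq j\rangle$. $\omega$ maps a word over $\{s_1,\dots,s_n\}$ to the element it represents. $l_R$ is the reflection length: minimal number of reflections (conjugates of generators) whose product is the element. $\mathbf{1}_{r\ge2}$ is $1$ if $r\ge2$ and $0$ otherwise; $s_1\cdots s_r$ denotes the product of the first $r$ generators. *)

From mathcomp Require Import all_boot.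
From mathcomp Require Import boolp.
Set Implicit Arguments. Unset Strict Implicit. Unset Printing Implicit Defensive.

(* Words over the generators s_1..s_n, with s_(i+1) encoded as the ordinal i : 'I_n. *)
Definition word (n : nat) := seq 'I_n.

(* The congruence on words generated by the defining relations of
   W^n_k = < s_1..s_n | s_i^2 = (s_i s_j)^k = 1  (i <> j) >.
   Two words are related iff they represent the same element of W^n_k,
   i.e. omega u = omega v.  (Since all generators are involutions, the
   monoid presented by these relations is the group W^n_k.) *)
Inductive wequiv (n k : nat) : word n -> word n -> Prop :=
  | we_refl (u : word n) : @wequiv n k u u
  | we_sym (u v : word n) : @wequiv n k u v -> @wequiv n k v u
  | we_trans (u v w : word n) : @wequiv n k u v -> @wequiv n k v w -> @wequiv n k u w
  | we_ctx (a b u v : word n) : @wequiv n k u v -> @wequiv n k (a ++ u ++ b) (a ++ v ++ b)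
  | we_sq (i : 'I_n) : @wequiv n k [:: i; i] [::]
  | we_braid (i j : 'I_n) : i != j -> @wequiv n k (flatten (nseq k [:: i; j])) [::].

(* A word representing a reflection: a conjugate w s_i w^{-1} of a generator
   (in W^n_k, w^{-1} is represented by rev w). *)
Definition is_reflection_word (n : nat) (t : word n) : Prop :=
  exists (w : word n) (i : 'I_n), t = w ++ [:: i] ++ rev w.

Definition refl_fact (n k : nat) (u : word n) (m : nat) : Prop :=
  exists ts : seq (word n),
    size ts = m /\ (forall t, t \in ts -> is_reflection_word t) /\
    wequiv k (flatten ts) u.

Lemma refl_fact_exists (n k : nat) (u : word n) :
  exists m, (fun m => `[< refl_fact k u m >]) m.
Proof.
exists (size u); apply/asboolP.
exists [seq [:: i] | i <- u]; split; first by rewrite size_map.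
split.
  move=> t /mapP [i _ ->]; by exists [::], i.
have -> : flatten [seq [:: i] | i <- u] = u by elim: u => //= i u ->.
exact: we_refl.
Qed.

Definition lR (n k : nat) (u : word n) : nat := ex_minn (refl_fact_exists k u).

Definition s123 : word 3 := [:: inord 0; inord 1; inord 2].

(* Write w_p(a,b,c) = (abc)^p ab.  Since x u y = (x u x^-1)(x y) and conjugates of
   reflections are reflections, l_R(x u y) <= l_R(u) + l_R(x y); in particular inserting
   a letter costs at most one reflection.  Deleting the k-1 letters c from w_(k-1) leaves
   (ab)^k = 1, so l_R(w_(k-1)) <= k-1.  Next w_(p+k) = (abc)^(k-1) w_p cab, and
   (abc)^(k-1) cab = (abc)^(k-2) abab becomes (ab)^k = 1 after deleting k-2 letters, so
   l_R(w_(p+k)) <= l_R(w_p) + k-2.  Finally w_(p+1)(a,b,c) = ab w_p(c,a,b) b and abb = a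
   give l_R(w_(p+1)(a,b,c)) <= l_R(w_p(c,a,b)) + 1.  Strong induction on p yields
   l_R(w_p) + 2 floor((p+1)/k) <= p+2; the word of the theorem is w_lam for r = 2,
   w_lam c for r = 3, and a w_(lam-1)(b,c,a) a for r = 1. *)

From mathcomp Require Import all_boot.
From mathcomp Require Import boolp.
From mathcomp Require Import zify.

Set Implicit Arguments.
Unset Strict Implicit.
Unset Printing Implicit Defensive.

Lemma flatten_nseqD (T : Type) (s : seq T) p q :
  flatten (nseq (p + q) s) = flatten (nseq p s) ++ flatten (nseq q s).
Proof. by rewrite nseqD flatten_cat. Qed.

Lemma flatten_nseqS (T : Type) (s : seq T) p :
  flatten (nseq p.+1 s) = flatten (nseq p s) ++ s.
Proof. by rewrite -addn1 flatten_nseqD /= cats0. Qed.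

Lemma flatten_nseq_rot (T : Type) (x y : seq T) p :
  x ++ flatten (nseq p (y ++ x)) = flatten (nseq p (x ++ y)) ++ x.
Proof.
elim: p => [|p IHp]; first by rewrite cats0.
by rewrite flatten_nseqS catA IHp flatten_nseqS -!catA.
Qed.

Section ReflectionLength.
Variables n k : nat.
Implicit Types (u v x y : word n) (i : 'I_n).

Lemma wequiv_cat u u' v v' :
  wequiv k u u' -> wequiv k v v' -> wequiv k (u ++ v) (u' ++ v').
Proof.
move=> Eu Ev; apply: (@we_trans _ _ _ (u' ++ v)).
  by have := we_ctx [::] v Eu.
by have := we_ctx u' [::] Ev; rewrite !cats0.
Qed.

Lemma wequiv_cancel2 x i y : wequiv k (x ++ [:: i; i] ++ y) (x ++ y).
Proof. exact: (we_ctx x y (we_sq k i)). Qed.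

Lemma wequiv_rev_cancel x y z : wequiv k (x ++ (rev y ++ y) ++ z) (x ++ z).
Proof.
elim: y x => [|i y IHy] x; first exact: we_refl.
apply: we_trans (IHy x).
have := wequiv_cancel2 (x ++ rev y) i (y ++ z).
by rewrite rev_cons -cats1 -!catA.
Qed.

Lemma wequiv_conj_flatten x (ts : seq (word n)) :
  wequiv k (flatten [seq x ++ t ++ rev x | t <- ts]) (x ++ flatten ts ++ rev x).
Proof.
elim: ts => [|t ts IHts] /=.
  by apply: we_sym; have := wequiv_rev_cancel [::] (rev x) [::]; rewrite revK cats0.
apply: we_trans (wequiv_cat (we_refl k _) IHts) _.
have := wequiv_rev_cancel (x ++ t) x (flatten ts ++ rev x).
by rewrite -!catA.
Qed.

Lemma refl_fact_wequiv u v m : wequiv k u v -> refl_fact k u m -> refl_fact k v m.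
Proof. by move=> Euv [ts [? [? Etu]]]; exists ts; do !split => //; apply: we_trans Euv. Qed.

Lemma refl_fact_sandwich x u y m1 m2 :
  refl_fact k u m1 -> refl_fact k (x ++ y) m2 -> refl_fact k (x ++ u ++ y) (m1 + m2).
Proof.
move=> [ts1 [size1 [refl1 E1]]] [ts2 [size2 [refl2 E2]]].
exists ([seq x ++ t ++ rev x | t <- ts1] ++ ts2); split.
  by rewrite size_cat size_map size1 size2.
split.
  move=> t; rewrite mem_cat => /orP[/mapP[t1 /refl1[w [i ->]] ->]|/refl2//].
  by exists (x ++ w), i; rewrite rev_cat -!catA.
rewrite flatten_cat; apply: we_trans (wequiv_cat (wequiv_conj_flatten x ts1) E2) _.
apply: we_trans (_ : wequiv k (x ++ u ++ rev x ++ x ++ y) _).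
  by have := we_ctx x (rev x ++ x ++ y) E1; rewrite -!catA.
by have := wequiv_rev_cancel (x ++ u) x y; rewrite -!catA.
Qed.

Lemma lR_spec u : refl_fact k u (lR k u).
Proof. by rewrite /lR; case: ex_minnP => m /asboolP. Qed.

Lemma lR_min u m : refl_fact k u m -> lR k u <= m.
Proof. by move=> Hm; rewrite /lR; case: ex_minnP => m0 _; apply; apply/asboolP. Qed.

Lemma lR_wequiv u v : wequiv k u v -> lR k u = lR k v.
Proof.
move=> Euv; apply/eqP; rewrite eqn_leq; apply/andP; split; apply: lR_min.
  exact: refl_fact_wequiv (we_sym Euv) (lR_spec v).
exact: refl_fact_wequiv Euv (lR_spec u).
Qed.

Lemma lR_trivial u : wequiv k u [::] -> lR k u = 0.
Proof.
move=> Eu; apply/eqP; rewrite -leqn0 lR_min //.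
by exists [::]; do !split => //; apply: we_sym.
Qed.

Lemma lR_letter i : lR k [:: i] <= 1.
Proof.
apply: lR_min; exists [:: [:: i]]; do !split; last exact: we_refl.
by move=> t; rewrite inE => /eqP ->; exists [::], i.
Qed.

Lemma lR_sandwich x u y : lR k (x ++ u ++ y) <= lR k u + lR k (x ++ y).
Proof. exact/lR_min/refl_fact_sandwich/lR_spec/lR_spec. Qed.

Lemma lR_cat u v : lR k (u ++ v) <= lR k u + lR k v.
Proof. exact: (lR_sandwich [::]). Qed.

Lemma lR_insert x i y : lR k (x ++ [:: i] ++ y) <= (lR k (x ++ y)).+1.
Proof. by rewrite -add1n (leq_trans (lR_sandwich _ _ _)) ?leq_add2r ?lR_letter. Qed.

Lemma lR_braid i j : i != j -> lR k (flatten (nseq k [:: i; j])) = 0.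
Proof. by move=> ij; apply/lR_trivial/we_braid. Qed.

End ReflectionLength.

Section CycleWord.
Variables n k : nat.
Implicit Types (a b c : 'I_n) (x y : word n).

Definition cycle_word a b c p : word n := flatten (nseq p [:: a; b; c]) ++ [:: a; b].

Lemma lR_insert_periodic a b c x y p :
  lR k (x ++ flatten (nseq p [:: a; b; c]) ++ y) <=
  p + lR k (x ++ flatten (nseq p [:: a; b]) ++ y).
Proof.
elim: p x => [|p IHp] x //=.
have := lR_insert k (x ++ [:: a; b]) c (flatten (nseq p [:: a; b; c]) ++ y).
rewrite -!catA /= => /leq_trans; apply.
by rewrite addSn ltnS; have := IHp (x ++ [:: a; b]); rewrite -!catA.
Qed.

Lemma lR_cycle_word_base a b c : 0 < k -> a != b -> lR k (cycle_word a b c k.-1) <= k.-1.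
Proof.
move=> k_gt0 ab; have := lR_insert_periodic a b c [::] [:: a; b] k.-1.
by rewrite -flatten_nseqS prednK // lR_braid // addn0.
Qed.

Lemma lR_cycle_word_period a b c p : 1 < k -> a != b ->
  lR k (cycle_word a b c (p + k)) <= lR k (cycle_word a b c p) + (k - 2).
Proof.
move=> k_gt1 ab.
have -> : cycle_word a b c (p + k) =
    flatten (nseq k.-1 [:: a; b; c]) ++ cycle_word a b c p ++ [:: c; a; b].
  rewrite /cycle_word (_ : p + k = k.-1 + p + 1); last by lia.
  by rewrite !flatten_nseqD /= -!catA.
rewrite (leq_trans (lR_sandwich _ _ _ _)) // leq_add2l.
have -> : k.-1 = (k - 2).+1 by lia.
have -> : flatten (nseq (k - 2).+1 [:: a; b; c]) ++ [:: c; a; b] =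
    (flatten (nseq (k - 2) [:: a; b; c]) ++ [:: a; b]) ++ [:: c; c] ++ [:: a; b].
  by rewrite flatten_nseqS -!catA.
rewrite (lR_wequiv (wequiv_cancel2 k _ _ _)) -catA.
apply: leq_trans (lR_insert_periodic a b c [::] [:: a; b; a; b] (k - 2)) _.
have -> : flatten (nseq (k - 2) [:: a; b]) ++ [:: a; b; a; b] = flatten (nseq k [:: a; b]).
  by rewrite -{2}(subnK k_gt1) addn2 !flatten_nseqS -catA.
by rewrite lR_braid // addn0.
Qed.

Lemma lR_cycle_word_rot a b c p :
  lR k (cycle_word a b c p.+1) <= (lR k (cycle_word c a b p)).+1.
Proof.
have -> : cycle_word a b c p.+1 = [:: a; b] ++ cycle_word c a b p ++ [:: b].
  rewrite /cycle_word !catA (flatten_nseq_rot [:: a; b] [:: c]).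
  by rewrite flatten_nseqS -!catA.
rewrite -addn1 (leq_trans (lR_sandwich _ _ _ _)) // leq_add2l.
by rewrite (lR_wequiv (wequiv_cancel2 k [:: a] b [::])) cats0 lR_letter.
Qed.

Lemma lR_cycle_word_conj a b c p :
  lR k (flatten (nseq p.+1 [:: a; b; c]) ++ [:: a]) <= lR k (cycle_word b c a p).
Proof.
have -> : flatten (nseq p.+1 [:: a; b; c]) ++ [:: a] = [:: a] ++ cycle_word b c a p ++ [:: a].
  rewrite flatten_nseqS -catA (_ : [:: a; b; c] ++ [:: a] = [:: a] ++ [:: b; c; a]) //.
  by rewrite catA -(flatten_nseq_rot [:: a] [:: b; c]) -!catA.
by rewrite (leq_trans (lR_sandwich _ _ _ _)) // (lR_trivial (we_sq k a)) addn0.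
Qed.

Lemma lR_cycle_word p a b c : 1 < k -> a != b -> b != c -> c != a ->
  lR k (cycle_word a b c p) + 2 * (p.+1 %/ k) <= p.+2.
Proof.
move=> k_gt1; have k_gt0 := ltnW k_gt1.
elim/ltn_ind: p a b c => p IHp a b c ab bc ca.
have [k_dvd|k_ndvd] := boolP (k %| p.+1); last case: p IHp k_ndvd => [|p] IHp k_ndvd.
- have [p_lt_k|k_le_p] := ltnP p k.
    have Ek : k = p.+1 by apply/eqP; rewrite eqn_leq dvdn_leq.
    have := lR_cycle_word_base c k_gt0 ab.
    rewrite (_ : k.-1 = p); last by rewrite Ek.
    by rewrite -Ek divnn k_gt0; lia.
  have := IHp (p - k) _ a b c ab bc ca; have := lR_cycle_word_period c (p - k) k_gt1 ab.
  have -> : p.+1 %/ k = (p - k).+1 %/ k + 1.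
    by rewrite -[in LHS](subnK k_le_p) -addSn divnDr ?dvdnn // divnn k_gt0.
  rewrite subnK //.
  have : p - k < p by rewrite ltn_subrL k_gt0 (leq_trans k_gt0).
  lia.
- rewrite divn_small // muln0 addn0.
  exact: leq_trans (lR_cat k [:: a] [:: b]) (leq_add (lR_letter _ _) (lR_letter _ _)).
- have := IHp p (ltnSn p) c a b ca ab bc; have := lR_cycle_word_rot a b c p.
  rewrite (divnS p.+1 k_gt0) (negbTE k_ndvd) add0n.
  lia.
Qed.

End CycleWord.

Theorem mainTheorem13 (k : nat) (hk : 3 <= k) (lam r : nat) (hr1 : 1 <= r) (hr3 : r <= 3) :
  lR k (flatten (nseq lam s123) ++ take r s123) + 2 * ((lam + (2 <= r)) %/ k) <= lam + r.
Proof.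
rewrite /s123; set a : 'I_3 := inord 0; set b : 'I_3 := inord 1; set c : 'I_3 := inord 2.
have ab : a != b by rewrite -val_eqE /= !inordK.
have bc : b != c by rewrite -val_eqE /= !inordK.
have ca : c != a by rewrite -val_eqE /= !inordK.
have k_gt1 : 1 < k := ltnW hk.
case: r hr1 hr3 => [|[|[|[|r]]]] // _ _.
- case: lam => [|p]; first by rewrite div0n muln0 addn0 lR_letter.
  rewrite addn0 addn1; apply: leq_trans (lR_cycle_word p k_gt1 bc ca ab).
  by rewrite leq_add2r lR_cycle_word_conj.
- by rewrite addn1 addn2; exact: lR_cycle_word.
- change (take 3 _) with ([:: a; b] ++ [:: c]); rewrite catA -/(cycle_word a b c lam).
  have := lR_cycle_word lam k_gt1 ab bc ca; have := lR_cat k (cycle_word a b c lam) [:: c].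
  have := lR_letter k c; rewrite addn1; lia.
Qed.
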